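(* Let $d\ge 1$, $A \in \mathbb{R}^{d+1}$ and $\Xi \in \mathbb{R}^{(d+1)\times d}$. Let $\Delta_d=\{\lambda\in\mathbb{R}^{d+1}:\lambda_i\ge 0,\sum_i\lambda_i=1\}$, integrate over $\Delta_d$ with respect to its $d$-dimensional Lebesgue (surface) measure, let $v(d)=\int_{\Delta_d}\mathrm{d}\lambda$, and let $\Sigma(d)$ be the covariance matrix of the uniform distribution on $\Delta_d$ (the Dirichlet$(1,\dots,1)$ distribution). Then $$\min_{\alpha_0\in\mathbb{R},\,\alpha\in\mathbb{R}^d}\ \int_{\Delta_d}\bigl(\alpha_0 - (A - \Xi\alpha)^\top\lambda\bigr)^2\,\mathrm{d}\lambda = v(d)\, A^\top\Bigl(\Sigma(d) - \Sigma(d)\,\Xi\,\bigl(\Xi^\top\Sigma(d)\,\Xi\bigr)^\dagger\,\Xi^\top\Sigma(d)\Bigr)A.$$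
   Context: $M^\dagger$ denotes the Moore–Penrose pseudoinverse of a matrix $M$. *)

From HB Require Import structures.
From mathcomp Require Import all_boot all_order all_algebra.
From mathcomp Require Import all_classical all_reals all_analysis.
Set Implicit Arguments. Unset Strict Implicit. Unset Printing Implicit Defensive.
Import Order.TTheory GRing.Theory Num.Theory.
Local Open Scope classical_set_scope.
Local Open Scope ring_scope.

Section Defs.
Variable R : realType.

Definition is_MP_inverse m n (M : 'M[R]_(m, n)) (X : 'M[R]_(n, m)) : Prop :=
  [/\ M *m X *m M = M, X *m M *m X = X,
      (M *m X)^T = M *m X & (X *m M)^T = X *m M].

Definition mp_pinv m n (M : 'M[R]_(m, n)) : 'M[R]_(n, m) :=
  xget 0 (is_MP_inverse M).

(** Iterated Lebesgue integral over the corner simplex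
    {x in R^n : x_i >= 0, sum_i x_i <= s}:
    int_{x_1 = 0}^{s} int_{x_2 = 0}^{s - x_1} ... f (x_1, ..., x_n). *)
Fixpoint corner_int (n : nat) (s : R) (f : seq R -> R) {struct n} : R :=
  match n with
  | 0 => f [::]
  | n'.+1 => Rintegral (@lebesgue_measure R) `[0, s]
               (fun t => corner_int n' (s - t) (fun xs => f (t :: xs)))
  end.

Definition simplex_pt (d : nat) (xs : seq R) : 'cV[R]_d.+1 :=
  \col_i nth 0 (xs ++ [:: 1 - \sum_(x <- xs) x]) i.

(** Parametrizing Delta_d by
    its first d coordinates, the surface element is sqrt(d+1) dx. *)
Definition simplex_int (d : nat) (g : 'cV[R]_d.+1 -> R) : R :=
  Num.sqrt (d.+1)%:R * corner_int d 1 (fun xs => g (simplex_pt d xs)).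

Definition simplex_vol (d : nat) : R := @simplex_int d (fun _ => 1).

Definition simplex_mean (d : nat) : 'cV[R]_d.+1 :=
  \col_i (@simplex_int d (fun l => l i 0) / simplex_vol d).

Definition simplex_cov (d : nat) : 'M[R]_d.+1 :=
  \matrix_(i, j) (@simplex_int d (fun l =>
      (l i 0 - simplex_mean d i 0) * (l j 0 - simplex_mean d j 0))
    / simplex_vol d).

Definition lsq_obj (d : nat) (A : 'cV[R]_d.+1) (Xi : 'M[R]_(d.+1, d))
    (a0 : R) (a : 'cV[R]_d) : R :=
  @simplex_int d (fun l => (a0 - ((A - Xi *m a)^T *m l) 0 0) ^+ 2).

End Defs.

(* Write [mu] for the mean of the uniform distribution on
   Delta_d and [c := A - Xi alpha].  Expanding the square around [mu], the
   objective equals [v(d) (alpha_0 - c^T mu)^2 + v(d) c^T Sigma(d) c]: the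
   cross term vanishes because [mu] is the mean, and the quadratic term is the
   covariance.  The first summand is killed by [alpha_0 := c^T mu]; the second
   is a generalized least-squares problem for the positive semidefinite form
   [Sigma(d)], minimized by [alpha := G^+ Xi^T Sigma(d) A] with
   [G := Xi^T Sigma(d) Xi], using only [G G^+ G = G].
   Expanding the integral needs linearity of the iterated Lebesgue integral,
   i.e. integrability of every inner integral; it holds for polynomial
   integrands, because integrating a polynomial in one variable up to a
   polynomial bound yields a polynomial in the remaining variables. *)

From HB Require Import structures.
From mathcomp Require Import all_boot all_order all_algebra.
From mathcomp Require Import all_classical all_reals all_analysis.
From mathcomp Require Import ring lra.
Import Order.TTheory GRing.Theory Num.Theory.
Import numFieldNormedType.Exports.
Local Open Scope ring_scope.
Set Implicit Arguments. Unset Strict Implicit. Unset Printing Implicit Defensive.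

Section PolynomialFunctions.
Variable R : comNzRingType.

Inductive polyfun : ((nat -> R) -> R) -> Prop :=
| polyfun_cst (a : R) : polyfun (fun _ => a)
| polyfun_var (k : nat) : polyfun (fun e => e k)
| polyfun_add f g : polyfun f -> polyfun g -> polyfun (fun e => f e + g e)
| polyfun_mul f g : polyfun f -> polyfun g -> polyfun (fun e => f e * g e).

Lemma eq_polyfun f g : f =1 g -> polyfun f -> polyfun g.
Proof. by move=> /funext ->. Qed.

Lemma polyfun_opp f : polyfun f -> polyfun (fun e => - f e).
Proof.
move=> Pf; apply: eq_polyfun (polyfun_mul (polyfun_cst (-1)) Pf) => e.
by rewrite mulN1r.
Qed.

Lemma polyfun_sub f g : polyfun f -> polyfun g -> polyfun (fun e => f e - g e).
Proof. by move=> Pf Pg; apply: polyfun_add Pf (polyfun_opp Pg). Qed.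

Lemma polyfun_sum (I : Type) (r : seq I) (f : I -> (nat -> R) -> R) :
  (forall i, polyfun (f i)) -> polyfun (fun e => \sum_(i <- r) f i e).
Proof.
move=> Pf; elim: r => [|i r IHr].
  by apply: eq_polyfun (polyfun_cst 0) => e; rewrite big_nil.
by apply: eq_polyfun (polyfun_add (Pf i) IHr) => e; rewrite big_cons.
Qed.

Lemma polyfun_exp f n : polyfun f -> polyfun (fun e => f e ^+ n).
Proof.
move=> Pf; elim: n => [|n IHn].
  by apply: eq_polyfun (polyfun_cst 1) => e; rewrite expr0.
by apply: eq_polyfun (polyfun_mul Pf IHn) => e; rewrite exprS.
Qed.

Lemma polyfun_shift f : polyfun f -> polyfun (fun e => f (fun k => e k.+1)).
Proof.
elim=> [a|k|{}f g _ Pf _ Pg|{}f g _ Pf _ Pg].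
- exact: polyfun_cst.
- exact: polyfun_var.
- exact: polyfun_add.
- exact: polyfun_mul.
Qed.

Definition cons_env (t : R) (e : nat -> R) : nat -> R :=
  fun k => if k is k'.+1 then e k' else t.

Lemma polyfun_cons_env_poly f : polyfun f ->
  exists (p : (nat -> R) -> {poly R}) (N : nat),
    [/\ forall i, polyfun (fun e => (p e)`_i), forall e, (size (p e) <= N)%N
      & forall t e, f (cons_env t e) = (p e).[t]].
Proof.
elim=> [a|[|k]|{}f g _ [p [N [Pp Np fp]]] _ [q [M [Pq Mq gq]]]
               |{}f g _ [p [N [Pp Np fp]]] _ [q [M [Pq Mq gq]]]].
- exists (fun _ => a%:P), 1%N; split=> [i|e|t e]; last by rewrite hornerC.
    apply: eq_polyfun (polyfun_cst (if i == 0%N then a else 0)) => e.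
    by rewrite coefC.
  by rewrite size_polyC leq_b1.
- exists (fun _ => 'X), 2%N; split=> [i|e|t e]; last by rewrite hornerX.
    by apply: eq_polyfun (polyfun_cst (i == 1%N)%:R) => e; rewrite coefX.
  by rewrite size_polyX.
- exists (fun e => (e k)%:P), 1%N; split=> [i|e|t e]; last by rewrite hornerC.
    apply: eq_polyfun
      (polyfun_mul (polyfun_cst (i == 0%N)%:R) (polyfun_var k)) => e.
    by rewrite coefC; case: (i == 0%N); rewrite ?mul1r ?mul0r.
  by rewrite size_polyC leq_b1.
- exists (fun e => p e + q e), (maxn N M); split=> [i|e|t e].
  + by apply: eq_polyfun (polyfun_add (Pp i) (Pq i)) => e; rewrite coefD.
  + by rewrite (leq_trans (size_polyD _ _)) // geq_max !leq_max Np Mq orbT.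
  + by rewrite hornerD fp gq.
- exists (fun e => p e * q e), (N + M)%N; split=> [i|e|t e].
  + apply: eq_polyfun (polyfun_sum (index_enum 'I_i.+1)
        (fun j => polyfun_mul (Pp j) (Pq (i - j)%N))) => e.
    by rewrite coefM.
  + rewrite (leq_trans (size_polyMleq _ _)) //.
    by rewrite (leq_trans (leq_pred _)) ?leq_add.
  + by rewrite hornerM fp gq.
Qed.

(* The last entry of [xs] becomes variable 0, so that the outermost
   integration variable [t] is peeled off by
   [cat_env (t :: xs) e = cat_env xs (cons_env t e)]. *)
Definition cat_env (xs : seq R) (e : nat -> R) : nat -> R :=
  foldl (fun e x => cons_env x e) e xs.

Lemma cat_env_rcons xs x (e : nat -> R) :
  cat_env (rcons xs x) e = cons_env x (cat_env xs e).
Proof. by rewrite /cat_env -cats1 foldl_cat. Qed.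

Lemma cat_env_nth xs (e : nat -> R) i :
  (i < size xs)%N -> cat_env xs e (size xs - i.+1) = nth 0 xs i.
Proof.
elim/last_ind: xs i => [//|xs x IHxs] i.
rewrite size_rcons ltnS cat_env_rcons nth_rcons subSS leq_eqVlt.
case/predU1P => [->|i_lt]; first by rewrite subnn ltnn eqxx.
by rewrite -subnSK // i_lt -IHxs.
Qed.

Lemma sum_cat_env xs (e : nat -> R) :
  \sum_(x <- xs) x = \sum_(k < size xs) cat_env xs e k.
Proof.
elim/last_ind: xs => [|xs x IHxs]; first by rewrite big_nil big_ord0.
rewrite size_rcons big_ord_recl cat_env_rcons -cats1 big_cat big_seq1 IHxs.
by rewrite addrC.
Qed.

End PolynomialFunctions.

Section PolynomialIntegral.
Variable R : realType.
Local Notation mu := (@lebesgue_measure R).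

Definition antideriv (p : {poly R}) : {poly R} :=
  \poly_(i < (size p).+1) (if i is j.+1 then p`_j / j.+1%:R else 0).

Lemma coef_antideriv p i :
  (antideriv p)`_i = if i is j.+1 then p`_j / j.+1%:R else 0.
Proof.
rewrite coef_poly; case: i => [|j] //; rewrite ltnS.
by case: ltnP => // /(nth_default 0) ->; rewrite mul0r.
Qed.

Lemma size_antideriv p : (size (antideriv p) <= (size p).+1)%N.
Proof. exact: size_poly. Qed.

Lemma antiderivK p : (antideriv p)^`() = p.
Proof.
by apply/polyP => i; rewrite coef_deriv coef_antideriv -[_ *+ _]mulr_natr mulfVK.
Qed.

Lemma integrable_horner (p : {poly R}) (b : R) :
  mu.-integrable `[0, b]%classic (EFin \o horner p).
Proof.
apply: continuous_compact_integrable; first exact: segment_compact.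
by apply/continuous_subspaceT => x; exact: continuous_horner.
Qed.

Lemma Rintegral_horner_deriv (p q : {poly R}) (b : R) : q^`() = p -> 0 <= b ->
  Rintegral mu `[0, b]%classic (horner p) = q.[b] - q.[0].
Proof.
move=> qp; rewrite le_eqVlt => /predU1P[<-|b_gt0].
  by rewrite set_itv1 Rintegral_set1 subrr.
rewrite /Rintegral (@continuous_FTC2 _ _ (horner q)) //.
- by apply/continuous_subspaceT => x; exact: continuous_horner.
- split=> [x _|//|//]; first exact: derivable_horner.
  + by apply: cvg_at_right_filter; exact: continuous_horner.
  + by apply: cvg_at_left_filter; exact: continuous_horner.
- by move=> x _; rewrite -derivE qp.
Qed.

Lemma Rintegral_horner (p : {poly R}) (b : R) : 0 <= b ->
  Rintegral mu `[0, b]%classic (horner p) = (antideriv p).[b].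
Proof.
move=> b_ge0; rewrite (Rintegral_horner_deriv (antiderivK p) b_ge0).
by rewrite horner_coef0 coef_antideriv subr0.
Qed.

End PolynomialIntegral.

Section CornerIntegral.
Variable R : realType.
Local Notation mu := (@lebesgue_measure R).

Lemma itv0_subr_ge0 (s t : R) : t \in `[0, s]%classic -> 0 <= s - t.
Proof. by rewrite inE /= in_itv /= subr_ge0 => /andP[]. Qed.

Lemma eq_corner_int n s (f g : seq R -> R) :
  (forall xs, size xs = n -> f xs = g xs) -> corner_int n s f = corner_int n s g.
Proof.
elim: n s f g => [|n IHn] s f g fg /=; first exact: fg.
by apply: eq_Rintegral => t _; apply: IHn => xs xs_n; rewrite fg //= xs_n.
Qed.

(* Each integration maps polynomials to polynomials: this is what makes
   every inner integral integrable. *)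
Lemma corner_int_polyfun n (f s : (nat -> R) -> R) : polyfun f -> polyfun s ->
  exists2 F, polyfun F & forall e, 0 <= s e ->
    corner_int n (s e) (fun xs => f (cat_env xs e)) = F e.
Proof.
move=> Pf; elim: n s => [|n IHn] s Ps; first by exists f.
have [G PG Gs] := IHn (fun e => s (fun k => e k.+1) - e 0%N)
  (polyfun_sub (polyfun_shift Ps) (polyfun_var _ 0)).
have [p [N [Pp Np Gp]]] := polyfun_cons_env_poly PG.
exists (fun e => \sum_(i < N.+1) (antideriv (p e))`_i * s e ^+ i).
  apply: polyfun_sum => -[[|i] i_lt]; apply: polyfun_mul (polyfun_exp _ Ps).
    by apply: eq_polyfun (polyfun_cst 0) => e; rewrite coef_antideriv.
  apply: eq_polyfun (polyfun_mul (Pp i) (polyfun_cst i.+1%:R^-1)) => e.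
  by rewrite coef_antideriv.
move=> e s_ge0 /=.
rewrite -horner_coef_wide ?(leq_trans (size_antideriv _)) ?ltnS //.
rewrite -(Rintegral_horner (p e) s_ge0).
apply: eq_Rintegral => t /itv0_subr_ge0 t_le_s.
by transitivity (G (cons_env t e)); [exact: Gs | exact: Gp].
Qed.

Lemma corner_int_slice_integrable n (f : (nat -> R) -> R) e s : polyfun f ->
  mu.-integrable `[0, s]%classic (EFin \o fun t =>
    corner_int n (s - t) (fun xs => f (cat_env xs (cons_env t e)))).
Proof.
move=> Pf.
have [G PG Gs] := corner_int_polyfun n Pf
  (polyfun_sub (polyfun_cst s) (polyfun_var R 0)).
have [p [_ [_ _ Gp]]] := polyfun_cons_env_poly PG.
apply: eq_integrable (integrable_horner (p e) s) => // t.
move=> /itv0_subr_ge0 t_le_s.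
by rewrite /= -Gp -Gs.
Qed.

Lemma corner_int_lin n (f g : (nat -> R) -> R) a e s :
  polyfun f -> polyfun g ->
  corner_int n s (fun xs => a * f (cat_env xs e) + g (cat_env xs e)) =
  a * corner_int n s (fun xs => f (cat_env xs e))
    + corner_int n s (fun xs => g (cat_env xs e)).
Proof.
move=> Pf Pg; elim: n e s => [//|n IHn] e s /=.
rewrite -RintegralZl ?corner_int_slice_integrable // -RintegralD //=.
- by apply: eq_Rintegral => t _; apply: IHn.
- exact: integrableZl _ _ (corner_int_slice_integrable _ _ _ Pf).
- exact: corner_int_slice_integrable.
Qed.

Lemma corner_int_ge0 n s (f : seq R -> R) : (forall xs, 0 <= f xs) ->
  0 <= corner_int n s f.
Proof.
elim: n s f => [|n IHn] s f f_ge0 //=.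
by apply: Rintegral_ge0 => t _; apply: IHn.
Qed.

Lemma corner_int1 n (s : R) : 0 <= s ->
  corner_int n s (fun _ => 1) = s ^+ n / n`!%:R.
Proof.
elim: n s => [|n IHn] s s_ge0 /=; first by rewrite expr0 fact0 divr1.
pose u : {poly R} := s%:P - 'X.
have u_t t : u.[t] = s - t by rewrite hornerD hornerN hornerC hornerX.
have un_t t : ((n`!%:R)^-1 *: u ^+ n).[t] = (s - t) ^+ n / n`!%:R.
  by rewrite hornerZ horner_exp u_t mulrC.
transitivity (Rintegral mu `[0, s]%classic (horner ((n`!%:R)^-1 *: u ^+ n))).
  apply: eq_Rintegral => t /itv0_subr_ge0 t_le_s.
  by rewrite IHn //; exact/esym/un_t.
rewrite (@Rintegral_horner_deriv _ _ (- ((n.+1)`!%:R^-1 *: u ^+ n.+1))) //.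
  rewrite !hornerN !hornerZ !horner_exp !u_t subrr subr0 expr0n mulr0 oppr0.
  by rewrite sub0r opprK mulrC.
rewrite derivN derivZ deriv_exp derivB derivC derivX sub0r mulN1r mulNrn.
rewrite scalerN opprK -(scaler_nat n.+1) scalerA factS natrM invfM mulrAC.
by rewrite mulVf ?mul1r ?pnatr_eq0.
Qed.

End CornerIntegral.

Section Simplex.
Variables (R : realType) (d : nat).
Local Notation I := (@simplex_int R d).

Definition simplex_polyfun (g : 'cV[R]_d.+1 -> R) : Prop :=
  exists2 f : (nat -> R) -> R, polyfun f &
    forall xs e, size xs = d -> g (simplex_pt d xs) = f (cat_env xs e).

Lemma simplex_polyfun_cst a : simplex_polyfun (fun _ => a).
Proof. by exists (fun _ => a) => //; exact: polyfun_cst. Qed.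

Lemma simplex_polyfun_add g h : simplex_polyfun g -> simplex_polyfun h ->
  simplex_polyfun (fun l => g l + h l).
Proof.
move=> [f Pf gf] [k Pk hk]; exists (fun e => f e + k e); first exact: polyfun_add.
by move=> xs e xs_d; rewrite (gf _ e) // (hk _ e).
Qed.

Lemma simplex_polyfun_mul g h : simplex_polyfun g -> simplex_polyfun h ->
  simplex_polyfun (fun l => g l * h l).
Proof.
move=> [f Pf gf] [k Pk hk]; exists (fun e => f e * k e); first exact: polyfun_mul.
by move=> xs e xs_d; rewrite (gf _ e) // (hk _ e).
Qed.

Lemma simplex_polyfun_sum (J : Type) (r : seq J) (g : J -> 'cV[R]_d.+1 -> R) :
  (forall j, simplex_polyfun (g j)) ->
  simplex_polyfun (fun l => \sum_(j <- r) g j l).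
Proof.
move=> Pg; elim: r => [|j r IHr].
  rewrite (_ : (fun _ => _) = fun=> 0); first exact: simplex_polyfun_cst.
  by apply/funext => l; rewrite big_nil.
rewrite (_ : (fun _ => _) = fun l => g j l + \sum_(i <- r) g i l).
  exact: simplex_polyfun_add.
by apply/funext => l; rewrite big_cons.
Qed.

Lemma simplex_polyfun_coord i : simplex_polyfun (fun l => l i 0).
Proof.
exists (fun e => if (i < d)%N then e (d - i.+1)%N else 1 - \sum_(k < d) e k).
  case: ltnP => _; first exact: polyfun_var.
  apply: polyfun_sub; first exact: polyfun_cst.
  by apply: polyfun_sum => k; exact: polyfun_var.
move=> xs e xs_d; rewrite /simplex_pt mxE nth_cat xs_d.
case: ltnP => [i_lt|i_ge]; first by rewrite -(cat_env_nth e) ?xs_d.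
have -> : nat_of_ord i = d by apply/eqP; rewrite eqn_leq i_ge -ltnS ltn_ord.
by rewrite subnn /= (sum_cat_env _ e) xs_d.
Qed.

Lemma simplex_int_cat_env g f :
  (forall xs e, size xs = d -> g (simplex_pt d xs) = f (cat_env xs e)) ->
  I g = Num.sqrt d.+1%:R * corner_int d 1 (fun xs => f (cat_env xs (fun=> 0))).
Proof. by move=> gf; congr (_ * _); apply: eq_corner_int => xs; exact: gf. Qed.

Lemma simplex_int_lin a g h : simplex_polyfun g -> simplex_polyfun h ->
  I (fun l => a * g l + h l) = a * I g + I h.
Proof.
move=> [f Pf gf] [k Pk hk].
rewrite (simplex_int_cat_env gf) (simplex_int_cat_env hk).
rewrite (@simplex_int_cat_env _ (fun e => a * f e + k e)); last first.
  by move=> xs e xs_d; rewrite (gf _ e) // (hk _ e).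
by rewrite corner_int_lin // mulrDr mulrCA.
Qed.

Lemma simplex_int0 : I (fun=> 0) = 0.
Proof.
have := simplex_int_lin (-1) (simplex_polyfun_cst 1) (simplex_polyfun_cst 1).
by rewrite mulN1r addNr mulN1r addNr.
Qed.

Lemma simplex_intZ a g : simplex_polyfun g -> I (fun l => a * g l) = a * I g.
Proof.
move=> Pg; have := simplex_int_lin a Pg (simplex_polyfun_cst 0).
by rewrite simplex_int0 addr0 => <-; congr I; apply/funext => l; rewrite addr0.
Qed.

Lemma simplex_intD g h : simplex_polyfun g -> simplex_polyfun h ->
  I (fun l => g l + h l) = I g + I h.
Proof.
move=> Pg Ph; rewrite -[I g]mul1r -simplex_int_lin //.
by congr I; apply/funext => l; rewrite mul1r.
Qed.

Lemma simplex_int_sum (J : Type) (r : seq J) (g : J -> 'cV[R]_d.+1 -> R) :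
  (forall j, simplex_polyfun (g j)) ->
  I (fun l => \sum_(j <- r) g j l) = \sum_(j <- r) I (g j).
Proof.
move=> Pg; elim: r => [|j r IHr].
  rewrite big_nil -[in RHS]simplex_int0.
  by congr I; apply/funext => l; rewrite big_nil.
rewrite big_cons -IHr -simplex_intD //; last exact: simplex_polyfun_sum.
by congr I; apply/funext => l; rewrite big_cons.
Qed.

Lemma simplex_int_cst a : I (fun=> a) = a * simplex_vol R d.
Proof.
rewrite -(simplex_intZ a (simplex_polyfun_cst 1)).
by congr I; apply/funext => l; rewrite mulr1.
Qed.

Lemma simplex_int_ge0 g : (forall l, 0 <= g l) -> 0 <= I g.
Proof. by move=> g_ge0; rewrite mulr_ge0 ?sqrtr_ge0 ?corner_int_ge0. Qed.

Lemma simplex_vol_gt0 : 0 < simplex_vol R d.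
Proof.
by rewrite /simplex_vol /simplex_int corner_int1 // expr1n mul1r mulr_gt0.
Qed.

Local Notation v := (simplex_vol R d).
Local Notation mu := (simplex_mean R d).
Local Notation S := (simplex_cov R d).

Lemma simplex_int_coord i : I (fun l => l i 0) = v * mu i 0.
Proof. by rewrite mxE mulrC divfK ?gt_eqF ?simplex_vol_gt0. Qed.

Lemma simplex_int_cov i j :
  I (fun l => (l i 0 - mu i 0) * (l j 0 - mu j 0)) = v * S i j.
Proof. by rewrite [S i j]mxE mulrC divfK ?gt_eqF ?simplex_vol_gt0. Qed.

Let dev (c l : 'cV[R]_d.+1) : R := \sum_i c i 0 * (l i 0 - mu i 0).

Let simplex_polyfun_dev_coord i :
  simplex_polyfun (fun l : 'cV[R]_d.+1 => l i 0 - mu i 0).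
Proof.
exact: simplex_polyfun_add (simplex_polyfun_coord i) (simplex_polyfun_cst _).
Qed.

Let simplex_polyfun_dev_term (c : 'cV[R]_d.+1) i :
  simplex_polyfun (fun l => c i 0 * (l i 0 - mu i 0)).
Proof.
exact: simplex_polyfun_mul (simplex_polyfun_cst _) (simplex_polyfun_dev_coord i).
Qed.

Let simplex_polyfun_dev c : simplex_polyfun (dev c).
Proof. by apply: simplex_polyfun_sum => i; exact: simplex_polyfun_dev_term. Qed.

Let simplex_int_dev c : I (dev c) = 0.
Proof.
rewrite simplex_int_sum => [|i]; last exact: simplex_polyfun_dev_term.
apply: big1 => i _; rewrite simplex_intZ // simplex_intD.
- rewrite simplex_int_coord simplex_int_cst mulNr [mu i 0 * _]mulrC.
  by rewrite subrr mulr0.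
- exact: simplex_polyfun_coord.
- exact: simplex_polyfun_cst.
Qed.

Let simplex_int_dev_sqr c : I (fun l => dev c l ^+ 2) = v * (c^T *m S *m c) 0 0.
Proof.
have Pcov i j : simplex_polyfun (fun l => (l i 0 - mu i 0) * (l j 0 - mu j 0)).
  exact: simplex_polyfun_mul.
transitivity (I (fun l => \sum_i \sum_j
    c i 0 * c j 0 * ((l i 0 - mu i 0) * (l j 0 - mu j 0)))).
  congr I; apply/funext => l; rewrite expr2 /dev mulr_suml; apply: eq_bigr => i _.
  by rewrite mulr_sumr; apply: eq_bigr => j _; ring.
have Pterm i j : simplex_polyfun (fun l =>
    c i 0 * c j 0 * ((l i 0 - mu i 0) * (l j 0 - mu j 0))).
  exact: simplex_polyfun_mul (simplex_polyfun_cst _) (Pcov i j).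
rewrite simplex_int_sum => [|i]; last exact: simplex_polyfun_sum.
transitivity (\sum_i \sum_j c i 0 * c j 0 * (v * S i j)).
  apply: eq_bigr => i _; rewrite simplex_int_sum //.
  by apply: eq_bigr => j _; rewrite simplex_intZ // simplex_int_cov.
rewrite !mxE mulr_sumr exchange_big; apply: eq_bigr => j _.
rewrite !mxE mulr_suml mulr_sumr; apply: eq_bigr => i _.
by rewrite !mxE; ring.
Qed.

Lemma simplex_int_affine_sqr (c : 'cV[R]_d.+1) a0 :
  I (fun l => (a0 - (c^T *m l) 0 0) ^+ 2) =
  v * (a0 - (c^T *m mu) 0 0) ^+ 2 + v * (c^T *m S *m c) 0 0.
Proof.
set m := a0 - (c^T *m mu) 0 0.
have Pdev2 : simplex_polyfun (fun l => dev c l ^+ 2).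
  exact: simplex_polyfun_mul (simplex_polyfun_dev c) (simplex_polyfun_dev c).
transitivity (I (fun l => m ^+ 2 + - (2 * m) * dev c l + dev c l ^+ 2)).
  congr I; apply/funext => l.
  have -> : (c^T *m l) 0 0 = (c^T *m mu) 0 0 + dev c l.
    apply/eqP; rewrite addrC -subr_eq; apply/eqP.
    by rewrite /dev !mxE -sumrB; apply: eq_bigr => i _; rewrite !mxE mulrBr.
  by rewrite /m; ring.
have Pcst := simplex_polyfun_cst (m ^+ 2).
have Plin := simplex_polyfun_mul (simplex_polyfun_cst (- (2 * m)))
  (simplex_polyfun_dev c).
rewrite (simplex_intD (simplex_polyfun_add Pcst Plin) Pdev2).
rewrite (simplex_intD Pcst Plin) simplex_int_cst simplex_intZ //.
by rewrite simplex_int_dev simplex_int_dev_sqr; ring.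
Qed.

Lemma simplex_cov_sym : S^T = S.
Proof.
apply/matrixP => i j; rewrite !mxE; congr (I _ / _).
by apply/funext => l; rewrite mulrC.
Qed.

Lemma simplex_cov_psd (c : 'cV[R]_d.+1) : 0 <= (c^T *m S *m c) 0 0.
Proof.
rewrite -(pmulr_rge0 _ simplex_vol_gt0) -simplex_int_dev_sqr.
by apply: simplex_int_ge0 => l; exact: sqr_ge0.
Qed.

End Simplex.

Lemma quad_linear_coef_eq0 (R : realFieldType) (b c : R) : 0 <= c ->
  (forall t, 0 <= 2 * t * b + t ^+ 2 * c) -> b = 0.
Proof.
move=> c_ge0 quad_ge0; pose u := (c + 1)^-1.
have c1_gt0 : 0 < c + 1 by rewrite ltr_wpDl.
have u_gt0 : 0 < u by rewrite invr_gt0.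
have uc : u * (c + 1) = 1 by rewrite mulVf ?gt_eqF.
have := quad_ge0 (- b * u) => quad_u.
have : b ^+ 2 * u <= 0 by nra.
rewrite pmulr_lle0 // => b2_le0.
by apply/eqP; rewrite -sqrf_eq0 eq_le b2_le0 sqr_ge0.
Qed.

Lemma trmx11 (R : pzRingType) (N : 'M[R]_1) : N^T = N.
Proof. by rewrite [N]mx11_scalar tr_scalar_mx. Qed.

Section GeneralizedLeastSquares.
Variables (R : realFieldType) (m : nat) (S : 'M[R]_m).
Hypothesis S_sym : S^T = S.
Hypothesis S_psd : forall z : 'cV[R]_m, 0 <= (z^T *m S *m z) 0 0.

Lemma form_sym p q (x : 'M[R]_(m, p)) (y : 'M[R]_(m, q)) :
  (x^T *m S *m y)^T = y^T *m S *m x.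
Proof. by rewrite !trmx_mul trmxK S_sym mulmxA. Qed.

Lemma quad_formD (x y : 'cV[R]_m) :
  ((x + y)^T *m S *m (x + y)) 0 0 =
  (x^T *m S *m x) 0 0 + 2 * (x^T *m S *m y) 0 0 + (y^T *m S *m y) 0 0.
Proof.
rewrite [(x + y)^T]linearD /= !mulmxDl !mulmxDr -[y^T *m S *m x]trmx11 form_sym.
move: (x^T *m S *m x) (x^T *m S *m y) (y^T *m S *m y) => a b c.
by rewrite !mxE; ring.
Qed.

Lemma psd_form_eq0 (x : 'cV[R]_m) : (x^T *m S *m x) 0 0 = 0 -> S *m x = 0.
Proof.
move=> x0; apply/colP => i; rewrite [in RHS]mxE.
pose z : 'cV[R]_m := delta_mx i 0.
have zSx : (z^T *m S *m x) 0 0 = (S *m x) i 0.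
  by rewrite trmx_delta -mulmxA -rowE mxE.
rewrite -zSx; apply: (quad_linear_coef_eq0 (S_psd z)) => t.
have := S_psd (x + t *: z).
rewrite [(x + t *: z)^T]linearD linearZ /= !mulmxDl !mulmxDr.
rewrite -!scalemxAl -!scalemxAr.
rewrite -[x^T *m S *m z]trmx11 form_sym; move: x0.
move: (x^T *m S *m x) (z^T *m S *m x) (z^T *m S *m z) => a b c.
by rewrite !mxE => ->; lra.
Qed.

Lemma psd_gram_eq0 p (W : 'M[R]_(m, p)) : W^T *m S *m W = 0 -> S *m W = 0.
Proof.
move=> WSW; apply/matrixP => i j.
have SWj : S *m col j W = 0.
  apply: psd_form_eq0.
  by rewrite tr_col -!row_mul colE mulmxA -colE WSW col0 row0 mxE.
by move/colP: SWj => /(_ i); rewrite colE mulmxA -colE !mxE.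
Qed.

Variables (k : nat) (Xi : 'M[R]_(m, k)) (X : 'M[R]_k).
Local Notation M := (Xi^T *m S *m Xi).
Hypothesis MXM : M *m X *m M = M.

Lemma ginv_gram_r : S *m Xi *m X *m M = S *m Xi.
Proof.
pose W := Xi *m (1%:M - X *m M).
have MW : M *m (1%:M - X *m M) = 0.
  by rewrite mulmxBr mulmx1 [M *m (X *m M)]mulmxA MXM subrr.
have /psd_gram_eq0 : W^T *m S *m W = 0.
  transitivity ((1%:M - X *m M)^T *m (M *m (1%:M - X *m M))).
    by rewrite /W trmx_mul !mulmxA.
  by rewrite MW mulmx0.
by rewrite /W mulmxA mulmxBr mulmx1 !mulmxA => /eqP; rewrite subr_eq0 => /eqP.
Qed.

Lemma ginv_gram_l : M *m X *m Xi^T *m S = Xi^T *m S.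
Proof.
have absorb (N : 'M[R]_k) (P : 'M[R]_(k, m)) :
    N *m X *m N = N -> N *m X^T *m P = P -> N *m X *m P = P.
  by move=> NXN NP; rewrite -{1}NP !mulmxA NXN NP.
rewrite -mulmxA; apply: absorb MXM _.
by move/(congr1 trmx): ginv_gram_r; rewrite !trmx_mul trmxK S_sym !mulmxA.
Qed.

Variable A : 'cV[R]_m.
Local Notation gls := (X *m (Xi^T *m S *m A)).

Lemma gls_orth : (A - Xi *m gls)^T *m S *m Xi = 0.
Proof.
rewrite -[(A - _)^T *m _ *m _]form_sym mulmxBr !mulmxA ginv_gram_l.
by rewrite subrr trmx0.
Qed.

Lemma gls_min_value :
  ((A - Xi *m gls)^T *m S *m (A - Xi *m gls)) 0 0 =
  (A^T *m (S - S *m Xi *m X *m Xi^T *m S) *m A) 0 0.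
Proof.
set r := A - Xi *m gls.
have -> : r^T *m S *m r = r^T *m S *m A.
  by rewrite {2}/r mulmxBr [r^T *m S *m (_ *m _)]mulmxA gls_orth mul0mx subr0.
rewrite /r [(A - _)^T]linearB /= !mulmxBl.
rewrite -[(Xi *m gls)^T *m S *m A]form_sym trmx11.
by rewrite mulmxBr mulmxBl !mulmxA.
Qed.

Lemma gls_min_le a :
  (A^T *m (S - S *m Xi *m X *m Xi^T *m S) *m A) 0 0 <=
  ((A - Xi *m a)^T *m S *m (A - Xi *m a)) 0 0.
Proof.
rewrite -gls_min_value; set r := A - Xi *m gls; set u := Xi *m (gls - a).
have -> : A - Xi *m a = r + u by rewrite /r /u mulmxBr addrA subrK.
have rSu : (r^T *m S *m u) 0 0 = 0 by rewrite /u mulmxA gls_orth mul0mx mxE.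
by rewrite quad_formD rSu mulr0 addr0 lerDl S_psd.
Qed.

End GeneralizedLeastSquares.

Lemma mulmx_trmx_eq0 (R : realFieldType) m (w : 'rV[R]_m) : w *m w^T = 0 -> w = 0.
Proof.
move=> wwT; apply/rowP => j; rewrite mxE.
have : (w *m w^T) 0 0 = \sum_k w 0 k ^+ 2.
  by rewrite mxE; apply: eq_bigr => k _; rewrite mxE expr2.
rewrite wwT mxE => /esym /(psumr_eq0P (fun k _ => sqr_ge0 _)) /(_ j isT) /eqP.
by rewrite sqrf_eq0 => /eqP.
Qed.

Lemma row_free_gram_unit (R : realFieldType) r m (P : 'M[R]_(r, m)) :
  row_free P -> P *m P^T \in unitmx.
Proof.
move=> freeP; rewrite -row_free_unit -kermx_eq0; apply/eqP/row_matrixP => i.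
set u := row i _.
have uPPT : u *m (P *m P^T) = 0 by rewrite -row_mul mulmx_ker row0.
have uP : u *m P = 0.
  by apply: mulmx_trmx_eq0; rewrite trmx_mul mulmxA -(mulmxA u) uPPT mul0mx.
have : (u <= kermx P)%MS by apply/sub_kermxP.
by move: freeP; rewrite -kermx_eq0 row0 => /eqP ->; rewrite submx0 => /eqP.
Qed.

Section MoorePenrose.
Variable R : realType.

Lemma is_MP_inverse_mul m n r (C : 'M[R]_(m, r)) (F : 'M[R]_(r, n)) :
  C^T *m C \in unitmx -> F *m F^T \in unitmx ->
  is_MP_inverse (C *m F) (F^T *m invmx (F *m F^T) *m invmx (C^T *m C) *m C^T).
Proof.
move=> unitC unitF; set X := F^T *m _ *m _ *m C^T.
have FX : F *m X = invmx (C^T *m C) *m C^T by rewrite /X !mulmxA mulmxV // mul1mx.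
have XC : X *m C = F^T *m invmx (F *m F^T).
  by rewrite /X -!mulmxA mulVmx // mulmx1.
have sym_inv k (N : 'M[R]_k) : N^T = N -> (invmx N)^T = invmx N.
  by move=> symN; rewrite trmx_inv symN.
split.
- transitivity (C *m (F *m X) *m C *m F); first by rewrite !mulmxA.
  rewrite FX; transitivity (C *m (invmx (C^T *m C) *m (C^T *m C)) *m F).
    by rewrite !mulmxA.
  by rewrite mulVmx // mulmx1.
- transitivity ((X *m C) *m (F *m X)); first by rewrite !mulmxA.
  by rewrite FX XC /X !mulmxA.
- rewrite -mulmxA FX mulmxA !trmx_mul trmxK sym_inv ?mulmxA //.
  by rewrite trmx_mul trmxK.
- rewrite mulmxA XC !trmx_mul trmxK sym_inv ?mulmxA //.
  by rewrite trmx_mul trmxK.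
Qed.

Lemma is_MP_inverse_exists m n (M : 'M[R]_(m, n)) : exists X, is_MP_inverse M X.
Proof.
rewrite -(mulmx_base M); eexists; apply: is_MP_inverse_mul.
  rewrite -[X in _ *m X]trmxK; apply: row_free_gram_unit.
  by rewrite /row_free mxrank_tr; exact: col_base_full.
exact/row_free_gram_unit/row_base_free.
Qed.

Lemma mp_pinvP m n (M : 'M[R]_(m, n)) : is_MP_inverse M (mp_pinv M).
Proof.
have [X MX] := is_MP_inverse_exists M.
by rewrite /mp_pinv; case: xgetP => // /(_ X MX).
Qed.

End MoorePenrose.

Theorem lemma8 (R : realType) (d : nat) (hd : (1 <= d)%N)
    (A : 'cV[R]_d.+1) (Xi : 'M[R]_(d.+1, d)) :
  let S := simplex_cov R d in
  let rhs := simplex_vol R d *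
    (A^T *m (S - S *m Xi *m mp_pinv (Xi^T *m S *m Xi) *m Xi^T *m S) *m A) 0 0 in
  (exists (a0 : R) (a : 'cV[R]_d), lsq_obj A Xi a0 a = rhs) /\
  (forall (a0 : R) (a : 'cV[R]_d), rhs <= lsq_obj A Xi a0 a).
Proof.
move=> S rhs.
have [GXG _ _ _] := mp_pinvP (Xi^T *m S *m Xi).
have S_sym := simplex_cov_sym R d.
have S_psd := @simplex_cov_psd R d.
have v_ge0 := ltW (simplex_vol_gt0 R d).
split.
  pose a := mp_pinv (Xi^T *m S *m Xi) *m (Xi^T *m S *m A).
  exists (((A - Xi *m a)^T *m simplex_mean R d) 0 0), a.
  rewrite /lsq_obj simplex_int_affine_sqr subrr expr0n mulr0 add0r.
  by rewrite (gls_min_value S_sym S_psd GXG).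
move=> a0 a; rewrite /lsq_obj simplex_int_affine_sqr.
rewrite ler_wpDl ?(mulr_ge0 v_ge0 (sqr_ge0 _)) // ler_wpM2l //.
exact: (gls_min_le S_sym S_psd GXG).
Qed.
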